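(* Let $k$ be an algebraically closed field of characteristic $0$, $d\ge3$, $n\ge2$, and let $V_n$ have basis $v_1,\dots,v_n$ with symmetric $d$-linear form $\Theta_d(v_{i_1},\dots,v_{i_d})=1$ if $i_1+\dots+i_d=(d-1)n+1$ and $0$ otherwise. Let $\psi(v_i)=v_{i-1}$ ($v_0=0$), so that the center $\mathrm{Cent}_k(n,d)=k[\psi]$ has basis $1,\psi,\dots,\psi^{n-1}$. Let $\mathbf{G}'=k^\times\times k^{n-2}$, whose elements are written $a=(a_1,\dots,a_{n-1})$. Define $\rho_1(a)=a_1\psi+\dots+a_{n-1}\psi^{n-1}$ and let $\rho_2(a)$ be the $n\times n$ matrix whose $j$-th column ($j=0,\dots,n-1$) is the coordinate vector of $\rho_1(a)^j$ in the basis $1,\psi,\dots,\psi^{n-1}$. Define $m(a,b)\in\mathbf{G}'$ as the second column of $\rho_2(a)\rho_2(b)$ with its first entry deleted. Then $\mathbf{G}'$ is a group with multiplication $m$ and neutral element $e=(1,0,\dots,0)$, and $\mathbf{G}'$ is isomorphic to the group $\mathbf{G}$ of $k$-algebra automorphisms of $\mathrm{Cent}_k(n,d)$.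
   Context: $\mathrm{Cent}_k(n,d)=\{f\in\mathrm{End}_k(V_n):\Theta_d(fu_1,u_2,\dots,u_d)=\Theta_d(u_1,fu_2,\dots,u_d)\ \forall u_i\}$. *)

From mathcomp Require Import all_boot all_algebra.
Set Implicit Arguments. Unset Strict Implicit. Unset Printing Implicit Defensive.
Import GRing.Theory.
Local Open Scope ring_scope.

Section Defs.
Variable k : fieldType.

(* V_n = 'cV[k]_n; the basis vector v_i (1 <= i <= n) is the column
   vector delta at (0-based) index i-1.  End_k(V_n) = 'M[k]_n acting by *m. *)

(* The symmetric d-linear form Theta_d, i.e. the multilinear extension of
   Theta_d(v_{i_1},...,v_{i_d}) = [i_1 + ... + i_d = (d-1)n+1]
   (1-based indices i_l = j_l + 1). *)
Definition Theta (n d : nat) (u : 'I_d -> 'cV[k]_n) : k :=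
  \sum_(j : {ffun 'I_d -> 'I_n} | (\sum_(l < d) (j l).+1 == (d - 1) * n + 1)%N)
     \prod_(l < d) u l (j l) ord0.

Definition upd (n d : nat) (u : 'I_d -> 'cV[k]_n) (l : 'I_d) (f : 'M[k]_n) :
  'I_d -> 'cV[k]_n := fun i => if i == l then f *m u i else u i.

Definition inCent (n d : nat) (f : 'M[k]_n) : Prop :=
  forall (u : 'I_d -> 'cV[k]_n) (l1 l2 : 'I_d),
    nat_of_ord l1 = 0%N -> nat_of_ord l2 = 1%N ->
    Theta (upd u l1 f) = Theta (upd u l2 f).

(* k-algebra automorphisms of the (unital, multiplication = composition)
   algebra Cent_k(n,d), represented by maps 'M_n -> 'M_n considered on Cent. *)
Definition is_alg_aut (n d : nat) (s : 'M[k]_n -> 'M[k]_n) : Prop :=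
  (forall f, inCent d f -> inCent d (s f)) /\
  (forall f g, inCent d f -> inCent d g -> s (f + g) = s f + s g) /\
  (forall (c : k) f, inCent d f -> s (c *: f) = c *: s f) /\
  (forall f g, inCent d f -> inCent d g -> s (f *m g) = s f *m s g) /\
  s 1%:M = 1%:M /\
  (forall f g, inCent d f -> inCent d g -> s f = s g -> f = g) /\
  (forall g, inCent d g -> exists2 f, inCent d f & s f = g).

Definition psi (n : nat) : 'M[k]_n :=
  \matrix_(i < n, j < n) (nat_of_ord j == (nat_of_ord i).+1)%:R.

Definition psi_basis (n : nat) : 'M[k]_(n, n * n) :=
  \matrix_(i < n) mxvec (psi n ^+ i).

Definition psi_coord (n : nat) (M : 'M[k]_n) : 'rV[k]_n :=
  mxvec M *m pinvmx (psi_basis n).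

(* G' = k^x * k^{n-2}, a = (a_1, ..., a_{n-1}) stored 0-based in 'rV_(n-1) *)
Definition inGp (n : nat) (a : 'rV[k]_(n.-1)) : bool :=
  [forall i : 'I_(n.-1), (nat_of_ord i == 0%N) ==> (a ord0 i != 0)].

Definition rho1 (n : nat) (a : 'rV[k]_(n.-1)) : 'M[k]_n :=
  \sum_(i < n.-1) a ord0 i *: psi n ^+ (nat_of_ord i).+1.

Definition rho2 (n : nat) (a : 'rV[k]_(n.-1)) : 'M[k]_n :=
  \matrix_(i < n, j < n) psi_coord (rho1 a ^+ nat_of_ord j) ord0 i.

Lemma succ_ord_proof (n : nat) (i : 'I_(n.-1)) : ((nat_of_ord i).+1 < n)%N.
Proof. by case: n i => [[]|n] //= i; rewrite ltnS. Qed.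
Definition succ_ord (n : nat) (i : 'I_(n.-1)) : 'I_n := Ordinal (succ_ord_proof i).

Lemma one_ord_proof (n : nat) (i : 'I_(n.-1)) : (1 < n)%N.
Proof. by case: n i => [[]|[[]|n]] //= []. Qed.
Definition one_ord (n : nat) (i : 'I_(n.-1)) : 'I_n := Ordinal (one_ord_proof i).

Definition mG (n : nat) (a b : 'rV[k]_(n.-1)) : 'rV[k]_(n.-1) :=
  \row_(i < n.-1) (rho2 a *m rho2 b) (succ_ord i) (one_ord i).

Definition eG (n : nat) : 'rV[k]_(n.-1) :=
  \row_(i < n.-1) (nat_of_ord i == 0%N)%:R.

End Defs.

(* The commutant of the nilpotent shift psi is k[psi], the algebra of upper
   triangular Toeplitz matrices, and for d >= 3 it is exactly Cent_k(n,d): the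
   Gram matrices G of Theta in its first two arguments are Hankel matrices
   vanishing above the antidiagonal, so psi^T G = G psi, while two choices of
   the remaining arguments give G = J and G = J psi, J the exchange matrix.
   Hence Cent_k(n,d) = k[X]/(X^n), whose automorphisms are the substitutions
   psi |-> rho1(a) with a_1 != 0.  The matrix rho2(a) is the substitution in the
   basis psi^j, so m(a,b) is the truncated composition of the power series
   rho_poly b and rho_poly a; associativity, units and inverses follow, the
   inverse by solving the triangular system rho2(a) y = e_1. *)

From mathcomp Require Import all_boot all_algebra perm.
From mathcomp Require Import zify ring.
Set Implicit Arguments. Unset Strict Implicit. Unset Printing Implicit Defensive.
Import GRing.Theory.
Local Open Scope ring_scope.

Section HornerMxFacts.
Variables (R : comNzRingType) (m : nat).
Implicit Types (A G : 'M[R]_m.+1) (p q : {poly R}).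

Lemma coef0_rVpoly (v : 'rV[R]_m.+1) : (rVpoly v)`_0 = v 0 0.
Proof. exact: (coef_rVpoly_ord v 0). Qed.

Lemma horner_mx_coef A p : horner_mx A p = \sum_(i < size p) p`_i *: A ^+ i.
Proof.
rewrite -[in LHS](coefK p) poly_def linear_sum; apply: eq_bigr => i _.
by rewrite linearZ /= rmorphXn /= horner_mx_X.
Qed.

Lemma horner_mx_comp A p q : horner_mx A (p \Po q) = horner_mx (horner_mx A q) p.
Proof.
elim/poly_ind: p => [|p c IHp]; first by rewrite comp_poly0 !rmorph0.
rewrite comp_polyD comp_polyM comp_polyX comp_polyC !rmorphD !rmorphM /=.
by rewrite IHp !horner_mx_X !horner_mx_C.
Qed.

Lemma horner_mx_nil A p N : A ^+ N = 0 -> (forall i, (i < N)%N -> p`_i = 0) ->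
  horner_mx A p = 0.
Proof.
move=> AN0 p_lo; rewrite -(poly_take_drop N p).
have -> : take_poly N p = 0.
  by apply/polyP => i; rewrite coef_take_poly coef0; case: ifP => // /p_lo.
by rewrite add0r rmorphM rmorphXn /= horner_mx_X AN0 mulr0.
Qed.

Lemma trmx_horner_mx_intertwine A G p :
  A^T *m G = G *m A -> (horner_mx A p)^T *m G = G *m horner_mx A p.
Proof.
move=> AG; elim/poly_ind: p => [|p c IHp]; first by rewrite rmorph0 trmx0 mul0mx mulmx0.
rewrite rmorphD rmorphM /= horner_mx_X horner_mx_C.
have cAp : horner_mx A p *m A = A *m horner_mx A p.
  exact/esym/comm_mx_horner/comm_mx_refl.
rewrite -mulmxE linearD /= trmx_mul tr_scalar_mx mulmxDl mulmxDr.
rewrite -mulmxA IHp mulmxA AG -mulmxA -cAp.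
by rewrite mul_scalar_mx mul_mx_scalar.
Qed.

Lemma horner_mx_morph A (t : 'M[R]_m.+1 -> 'M[R]_m.+1) :
    (forall B C, comm_mx A B -> comm_mx A C -> t (B + C) = t B + t C) ->
    (forall c B, comm_mx A B -> t (c *: B) = c *: t B) ->
    (forall B C, comm_mx A B -> comm_mx A C -> t (B *m C) = t B *m t C) ->
    t 1%:M = 1%:M ->
  forall p, t (horner_mx A p) = horner_mx (t A) p.
Proof.
move=> tD tZ tM t1; elim/poly_ind => [|p c IHp].
  by rewrite !rmorph0 -(scale0r 1%:M) tZ ?scale0r //; apply: comm_mx1.
have cAp : comm_mx A (horner_mx A p) by apply/comm_mx_horner/comm_mx_refl.
have cAc : comm_mx A c%:M by apply: comm_mx_scalar.
rewrite !rmorphD !rmorphM /= !horner_mx_X !horner_mx_C -mulmxE.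
rewrite tD ?tM ?IHp //; last exact: comm_mxM.
by rewrite -scalemx1 tZ ?t1 //; apply: comm_mx1.
Qed.

End HornerMxFacts.

Section ShiftMatrix.
Variables (k : fieldType) (n : nat).
Local Notation N := n.+1.
Local Notation ps := (psi k N).
Implicit Types (p q : {poly k}) (f g : 'M[k]_N) (x : 'rV[k]_N).

Lemma psiXE i (r c : 'I_N) : (ps ^+ i) r c = (c == r + i :> nat)%N%:R.
Proof.
elim: i r c => [|i IHi] r c; first by rewrite expr0 mxE addn0 eq_sym.
rewrite exprSr -mulmxE mxE.
under eq_bigr => s _ do rewrite IHi mxE mulr_natl mulrb.
rewrite -big_mkcond /= (big_ord1_eq _ (fun j => (c == j.+1 :> nat)%:R)) addnS.
by case: ltnP => // lt_c; rewrite ltn_eqF //; have := ltn_ord c; lia.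
Qed.

Lemma horner_psiE p (r c : 'I_N) :
  horner_mx ps p r c = if (r <= c)%N then p`_(c - r)%N else 0.
Proof.
rewrite horner_mx_coef summxE.
under eq_bigr => i _ do rewrite mxE psiXE mulr_natr mulrb.
rewrite -big_mkcond /=; case: leqP => [le_rc | lt_cr].
  rewrite (eq_bigl (fun i : 'I_(size p) => i == (c - r)%N :> nat)) => [|i]; last first.
    by apply/eqP/eqP => [->|->]; rewrite ?addKn ?subnKC.
  by rewrite (big_ord1_eq _ (fun i => p`_i)); case: ltnP => // ?; rewrite nth_default.
by rewrite big_pred0 // => i; apply/negbTE; rewrite neq_ltn ltn_addr.
Qed.

Lemma horner_psi_row0 p (c : 'I_N) : horner_mx ps p 0 c = p`_c.
Proof. by rewrite horner_psiE subn0. Qed.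

Lemma horner_psi_eq p q : (forall i, (i < N)%N -> p`_i = q`_i) ->
  horner_mx ps p = horner_mx ps q.
Proof.
move=> pq; apply/matrixP => r c; rewrite !horner_psiE; case: leqP => // _.
by rewrite pq // (leq_ltn_trans (leq_subr _ _)).
Qed.

Lemma psi_nilpotent : ps ^+ N = 0.
Proof.
rewrite -(horner_mx_X ps) -rmorphXn -(rmorph0 (horner_mx ps)).
by apply: horner_psi_eq => i lt_iN; rewrite coefXn coef0 ltn_eqF.
Qed.

Lemma psiX_neq0 : ps ^+ n != 0.
Proof. by apply/eqP => /matrixP/(_ 0 ord_max)/eqP; rewrite psiXE mxE eqxx oner_eq0. Qed.

Lemma mulmx_psiE (A : 'M[k]_N) r (c : 'I_N) :
  (A *m ps) r c = if (0 < c)%N then A r (inord c.-1) else 0.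
Proof.
rewrite mxE; under eq_bigr do rewrite mxE mulr_natr mulrb.
rewrite -big_mkcond /=; case: c => [[|c] lt_c] /=; first by rewrite big_pred0.
rewrite (big_pred1 (inord c)) // => a; rewrite /= eqSS -val_eqE /= inordK 1?eq_sym //.
exact: ltnW.
Qed.

Lemma trpsi_mulmxE (A : 'M[k]_N) (r : 'I_N) c :
  (ps^T *m A) r c = if (0 < r)%N then A (inord r.-1) c else 0.
Proof. by rewrite -[A]trmxK -trmx_mul mxE mulmx_psiE !mxE; case: ifP. Qed.

Lemma row_psi r : (r.+1 < N)%N -> row (inord r) ps = delta_mx 0 (inord r.+1).
Proof.
move=> lt_rN; have lt_r := ltnW lt_rN.
by apply/rowP => c; rewrite !mxE eqxx /= -val_eqE /= !inordK.
Qed.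

Lemma comm_psi_row0_eq0 g : comm_mx ps g -> row 0 g = 0 -> g = 0.
Proof.
move=> cg g0; suff rows0 r : (r < N)%N -> row (inord r) g = 0.
  by apply/row_matrixP => i; rewrite row0 -(inord_val i) rows0.
elim: r => [_|r IHr lt_rN].
  by rewrite (_ : inord 0 = 0) //; apply: val_inj; rewrite /= inordK.
by rewrite rowE -row_psi // -row_mul cg row_mul IHr ?mul0mx // ltnW.
Qed.

Lemma comm_psiE f : comm_mx ps f -> f = horner_mx ps (rVpoly (row 0 f)).
Proof.
move=> cf; apply/eqP; rewrite -subr_eq0; apply/eqP/comm_psi_row0_eq0.
  by apply/comm_mxB/comm_mx_horner/comm_mx_refl.
by apply/rowP => c; rewrite linearB !mxE horner_psi_row0 coef_rVpoly_ord mxE subrr.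
Qed.

Lemma horner_psi_rVpoly_inj : injective (fun x => horner_mx ps (rVpoly x)).
Proof.
move=> x y /(congr1 (row 0))/rowP xy; apply/rowP => c.
by move: (xy c); rewrite !mxE !horner_psi_row0 !coef_rVpoly_ord.
Qed.

Lemma psi_coord_horner x : psi_coord (horner_mx ps (rVpoly x)) = x.
Proof.
have hornerE y : horner_mx ps (rVpoly y) = vec_mx (y *m psi_basis k N).
  exact: horner_rVpoly.
apply: horner_psi_rVpoly_inj => /=.
by rewrite hornerE mulmxKpV ?mxvecK // hornerE vec_mxK submxMl.
Qed.

Lemma psi_coord_comm f : comm_mx ps f -> psi_coord f = row 0 f.
Proof. by move=> cf; rewrite {1}(comm_psiE cf) psi_coord_horner. Qed.

End ShiftMatrix.

Section PsiSubstitution.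
Variables (k : fieldType) (n : nat).
Local Notation N := n.+2.
Local Notation ps := (psi k N).
Local Notation rho1 := (@rho1 k N).
Local Notation rho2 := (@rho2 k N).
Local Notation mG := (@mG k N).
Local Notation succ_ord := (@succ_ord N).
Local Notation inGp := (@inGp k N).
Implicit Types (a b c : 'rV[k]_n.+1) (f g : 'M[k]_N) (p q : {poly k}).

Definition rho_poly a : {poly k} := 'X * rVpoly a.

Definition rho_aut a f : 'M[k]_N := horner_mx (rho1 a) (rVpoly (psi_coord f)).

Lemma coef_rho_polyX a j i :
  (rho_poly a ^+ j)`_i = if (i < j)%N then 0 else (rVpoly a ^+ j)`_(i - j).
Proof. by rewrite exprMn coefXnM. Qed.

Lemma coef0_rVpolyX a j : (rVpoly a ^+ j)`_0 = a 0 0 ^+ j.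
Proof. by rewrite -horner_coef0 horner_exp horner_coef0 coef0_rVpoly. Qed.

Lemma rho1E a : rho1 a = horner_mx ps (rho_poly a).
Proof.
rewrite rmorphM /= horner_mx_X horner_rVpoly mulmx_sum_row linear_sum mulr_sumr.
by apply: eq_bigr => i _; rewrite linearZ /= rowK mxvecK -scalerAr exprS.
Qed.

Lemma comm_psi_rho1 a : comm_mx ps (rho1 a).
Proof. by rewrite rho1E; apply/comm_mx_horner/comm_mx_refl. Qed.

Lemma rho1_succ a i : rho1 a 0 (succ_ord i) = a 0 i.
Proof. by rewrite rho1E horner_psi_row0 coefXM coef_rVpoly_ord. Qed.

Lemma rho1_row0 g : comm_mx ps g -> g 0 0 = 0 -> rho1 (\row_i g 0 (succ_ord i)) = g.
Proof.
move=> cg g00; rewrite [RHS]comm_psiE // rho1E; apply: horner_psi_eq.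
case=> [|i] lt_iN; rewrite coefXM /=; first by rewrite coef0_rVpoly mxE g00.
rewrite -[i]/(nat_of_ord (Ordinal (lt_iN : (i < n.+1)%N))) coef_rVpoly_ord mxE.
rewrite -[i.+1]/(nat_of_ord (Ordinal lt_iN)) coef_rVpoly_ord mxE.
by congr (g 0 _); apply: val_inj.
Qed.

Lemma rho1_inj : injective rho1.
Proof. by move=> a b ab; apply/rowP => i; rewrite -!rho1_succ ab. Qed.

Lemma rho1_nilpotent a : rho1 a ^+ N = 0.
Proof.
rewrite rho1E -rmorphXn -(rmorph0 (horner_mx ps)).
by apply: horner_psi_eq => i lt_iN; rewrite coef_rho_polyX lt_iN coef0.
Qed.

Lemma rho1X_top a : rho1 a ^+ n.+1 = a 0 0 ^+ n.+1 *: ps ^+ n.+1.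
Proof.
have -> : ps ^+ n.+1 = horner_mx ps 'X^(n.+1) by rewrite rmorphXn /= horner_mx_X.
rewrite rho1E -rmorphXn -linearZ /=.
apply: horner_psi_eq => i lt_iN; rewrite coef_rho_polyX coefZ coefXn.
case: ltnP => [lt_i | le_i]; first by rewrite ltn_eqF ?mulr0.
have -> : i = n.+1 by lia.
by rewrite subnn coef0_rVpolyX eqxx mulr1.
Qed.

Lemma rho_aut_horner a p : rho_aut a (horner_mx ps p) = horner_mx (rho1 a) p.
Proof.
rewrite /rho_aut psi_coord_comm; last exact/comm_mx_horner/comm_mx_refl.
apply/eqP; rewrite -subr_eq0 -rmorphB; apply/eqP/(horner_mx_nil (rho1_nilpotent a)).
move=> i lt_iN; rewrite coefB -[i]/(nat_of_ord (Ordinal lt_iN)) coef_rVpoly_ord.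
by rewrite mxE horner_psi_row0 subrr.
Qed.

Lemma comm_psi_rho_aut a f : comm_mx ps (rho_aut a f).
Proof. exact/comm_mx_horner/comm_psi_rho1. Qed.

Lemma rho_autD a f g : rho_aut a (f + g) = rho_aut a f + rho_aut a g.
Proof. by rewrite /rho_aut /psi_coord !linearD /= mulmxDl !linearD. Qed.

Lemma rho_autZ a (x : k) f : rho_aut a (x *: f) = x *: rho_aut a f.
Proof. by rewrite /rho_aut /psi_coord !linearZ /= -scalemxAl !linearZ. Qed.

Lemma rho_autM a f g : comm_mx ps f -> comm_mx ps g ->
  rho_aut a (f *m g) = rho_aut a f *m rho_aut a g.
Proof.
move=> cf cg; rewrite (comm_psiE cf) (comm_psiE cg) mulmxE -rmorphM.
by rewrite !rho_aut_horner rmorphM.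
Qed.

Lemma rho_aut1 a : rho_aut a 1%:M = 1%:M.
Proof. by rewrite -(horner_mx_C ps 1) rho_aut_horner !horner_mx_C. Qed.

Lemma rho_aut_psi a : rho_aut a ps = rho1 a.
Proof. by rewrite -{1}(horner_mx_X ps) rho_aut_horner horner_mx_X. Qed.

Lemma rho2E a (r j : 'I_N) : rho2 a r j = (rho_poly a ^+ j)`_r.
Proof.
rewrite mxE rho1E -rmorphXn psi_coord_comm ?mxE ?horner_psi_row0 //.
exact/comm_mx_horner/comm_mx_refl.
Qed.

Lemma mGE a b i : mG a b 0 i = \sum_(j < N) rho2 a (succ_ord i) j * (rho_poly b)`_j.
Proof. by rewrite !mxE; apply: eq_bigr => j _; rewrite [rho2 b _ _]rho2E expr1. Qed.

Lemma rho_poly_comp a b :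
  rho_poly b \Po rho_poly a = 'X * (rVpoly a * (rVpoly b \Po rho_poly a)).
Proof. by rewrite comp_polyM comp_polyX mulrA. Qed.

Lemma coef_rho_poly_mG a b i : (i < N)%N ->
  (rho_poly (mG a b))`_i = (rho_poly b \Po rho_poly a)`_i.
Proof.
case: i => [_|i lt_iN]; first by rewrite rho_poly_comp !coefXM.
rewrite coefXM -[i]/(nat_of_ord (Ordinal (lt_iN : (i < n.+1)%N))) coef_rVpoly_ord mGE.
have size_rb : (size (rho_poly b) <= N)%N.
  by rewrite (leq_trans (size_polyMleq _ _)) // size_polyX ltnS size_poly.
rewrite coef_comp_poly.
rewrite (big_ord_widen N (fun j => (rho_poly b)`_j * (rho_poly a ^+ j)`_i.+1) size_rb).
rewrite [RHS]big_mkcond /=; apply: eq_bigr => j _; rewrite rho2E mulrC.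
by case: ltnP => // le_size; rewrite nth_default // mul0r.
Qed.

Lemma rho1_mG a b : rho1 (mG a b) = rho_aut a (rho1 b).
Proof.
rewrite [rho1 b]rho1E rho_aut_horner [rho1 a]rho1E -horner_mx_comp rho1E.
exact/horner_psi_eq/coef_rho_poly_mG.
Qed.

Lemma rho_aut_mG a b f : comm_mx ps f -> rho_aut (mG a b) f = rho_aut a (rho_aut b f).
Proof.
move=> cf; rewrite (comm_psiE cf) !rho_aut_horner rho1_mG [rho1 b]rho1E.
by rewrite !rho_aut_horner -!horner_mx_comp rho_aut_horner.
Qed.

Lemma rho1_eG : rho1 (eG k N) = ps.
Proof.
rewrite /rho1 big_ord_recl big1 ?addr0; first by rewrite mxE scale1r expr1.
by move=> i _; rewrite mxE scale0r.
Qed.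

Lemma rho_aut_eG f : comm_mx ps f -> rho_aut (eG k N) f = f.
Proof. by move=> cf; rewrite {1}(comm_psiE cf) rho_aut_horner rho1_eG -comm_psiE. Qed.

Lemma mGA a b c : mG (mG a b) c = mG a (mG b c).
Proof. by apply: rho1_inj; rewrite !rho1_mG rho_aut_mG //; apply: comm_psi_rho1. Qed.

Lemma mG1g a : mG (eG k N) a = a.
Proof. by apply: rho1_inj; rewrite rho1_mG rho_aut_eG //; apply: comm_psi_rho1. Qed.

Lemma mGg1 a : mG a (eG k N) = a.
Proof. by apply: rho1_inj; rewrite rho1_mG rho1_eG rho_aut_psi. Qed.

Lemma mG00 a b : mG a b 0 0 = a 0 0 * b 0 0.
Proof.
rewrite -[mG a b 0 0]coef0_rVpoly.
have := coef_rho_poly_mG a b (isT : 1 < N)%N; rewrite coefXM /= => ->.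
rewrite rho_poly_comp coefXM /= coef0M -[(_ \Po _)`_0]horner_coef0 horner_comp.
by rewrite horner_coef0 coefXM /= horner_coef0 !coef0_rVpoly.
Qed.

Lemma inGpE a : inGp a = (a 0 0 != 0).
Proof.
apply/forallP/idP => [/(_ 0)/implyP -> // | a0 i]; apply/implyP => /eqP i0.
by rewrite (_ : i = 0) //; apply: val_inj.
Qed.

Lemma mG_inGp a b : inGp a -> inGp b -> inGp (mG a b).
Proof. by rewrite !inGpE mG00; apply: mulf_neq0. Qed.

Lemma inGp_eG : inGp (eG k N).
Proof. by rewrite inGpE mxE oner_eq0. Qed.

Lemma rho2_unitmx a : a 0 0 != 0 -> rho2 a \in unitmx.
Proof.
move=> a0; rewrite unitmxE det_trig; last first.
  by apply/is_trig_mxP => r j lt_rj; rewrite rho2E coef_rho_polyX lt_rj.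
rewrite unitfE; apply/prodf_neq0 => j _.
by rewrite rho2E coef_rho_polyX ltnn subnn coef0_rVpolyX expf_neq0.
Qed.

Lemma rho2_row0 a (j : 'I_N) : rho2 a 0 j = (j == 0)%:R.
Proof.
rewrite rho2E coef_rho_polyX sub0n coef0_rVpolyX lt0n -val_eqE /=.
by case: eqP => [->|]; rewrite ?expr0.
Qed.

(* Column 1 of rho2 b holds the coefficients of rho_poly b, so mG a b = e
   amounts to rho2 a *m y = e_1 for the coefficient column y of rho_poly b. *)
Lemma mG_invr a : inGp a -> exists2 b, inGp b & mG a b = eG k N.
Proof.
rewrite inGpE => a0; pose e1 : 'cV[k]_N := delta_mx (inord 1) 0.
have [y ay] : {y | rho2 a *m y = e1}.
  by exists (invmx (rho2 a) *m e1); rewrite mulKVmx // rho2_unitmx.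
have y0 : y 0 0 = 0.
  have := congr1 (fun M : 'cV[k]_N => M 0 0) ay; rewrite !mxE (bigD1 0) //= big1 ?addr0.
    by rewrite rho2_row0 mul1r -val_eqE /= inordK.
  by move=> j nz_j; rewrite rho2_row0 (negbTE nz_j) mul0r.
pose b := \row_i y (succ_ord i) 0.
have rb_coef (j : 'I_N) : (rho_poly b)`_j = y j 0.
  case: j => [[|j] lt_jN]; rewrite coefXM /=.
    by rewrite (_ : Ordinal lt_jN = 0) //; apply: val_inj.
  rewrite -[j]/(nat_of_ord (Ordinal (lt_jN : (j < n.+1)%N))) coef_rVpoly_ord mxE.
  by congr (y _ 0); apply: val_inj.
have ab : mG a b = eG k N.
  apply/rowP => i; rewrite mGE; under eq_bigr do rewrite rb_coef.
  have := congr1 (fun M : 'cV[k]_N => M (succ_ord i) 0) ay; rewrite mxE => ->.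
  by rewrite !mxE eqxx andbT -val_eqE /= inordK.
exists b => //; rewrite inGpE; apply: contraTneq isT => b0.
by have := mG00 a b; rewrite ab b0 mulr0 mxE => /eqP; rewrite oner_eq0.
Qed.

Lemma mG_inv a : inGp a -> exists b, [/\ inGp b, mG a b = eG k N & mG b a = eG k N].
Proof.
move=> Ga; have [b Gb ab] := mG_invr Ga; have [c _ bc] := mG_invr Gb.
have ac : a = c by rewrite -(mGg1 a) -bc -mGA ab mG1g.
by exists b; split; rewrite // ac.
Qed.

End PsiSubstitution.

Section ThetaGram.
Variables (k : fieldType) (n d : nat).
Local Notation N := n.+1.
Local Notation D := d.+2.
Local Notation ps := (psi k N).
Local Notation slot1 := (lift ord0 (ord0 : 'I_d.+1)).
Local Notation slot l := (lift ord0 (lift ord0 l)).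
Implicit Types (x y : 'cV[k]_N) (u w : 'I_D -> 'cV[k]_N) (f : 'M[k]_N).
Implicit Types (j : {ffun 'I_D -> 'I_N}).

Definition set12 x y u : 'I_D -> 'cV[k]_N :=
  fun l => if l == 0 :> nat then x else if l == 1 :> nat then y else u l.

Definition gram u : 'M[k]_N :=
  \matrix_(a, b) Theta (set12 (delta_mx a 0) (delta_mx b 0) u).

Definition prod_rest u j : k := \prod_(l < d) u (slot l) (j (slot l)) ord0.

Lemma eq_Theta u w : u =1 w -> Theta u = Theta w.
Proof. by move=> uw; apply: eq_bigr => j _; apply: eq_bigr => l _; rewrite uw. Qed.

Lemma prod_set12 x y u j :
  \prod_(l < D) set12 x y u l (j l) ord0 = x (j ord0) ord0 * (y (j slot1) ord0 * prod_rest u j).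
Proof. by rewrite !big_ord_recl. Qed.

Lemma sum_set12 j :
  (\sum_(l < D) (j l).+1 = (j ord0).+1 + ((j slot1).+1 + \sum_(l < d) (j (slot l)).+1))%N.
Proof. by rewrite !big_ord_recl. Qed.

Lemma gramE u a b : gram u a b =
  \sum_(j : {ffun 'I_D -> 'I_N} | (\sum_(l < D) (j l).+1 == (D - 1) * N + 1)%N)
     (j ord0 == a)%:R * ((j slot1 == b)%:R * prod_rest u j).
Proof. by rewrite mxE; apply: eq_bigr => j _; rewrite prod_set12 !mxE !andbT. Qed.

Lemma Theta_set12 x y u : Theta (set12 x y u) = (x^T *m gram u *m y) 0 0.
Proof.
have coordE (z : 'cV[k]_N) i : z i ord0 = \sum_a z a ord0 * (i == a)%:R.
  rewrite (bigD1 i) //= big1 => [|a /negbTE]; first by rewrite eqxx mulr1 addr0.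
  by rewrite eq_sym => ->; rewrite mulr0.
rewrite /Theta; under eq_bigr do rewrite prod_set12 (coordE x) (coordE y) mulr_suml.
under eq_bigr do under eq_bigr do rewrite mulr_suml mulr_sumr.
rewrite exchange_big; under eq_bigr do rewrite exchange_big /=.
rewrite mxE; under [RHS]eq_bigr do rewrite !mxE mulr_suml.
rewrite [RHS]exchange_big /=; apply: eq_bigr => a _; apply: eq_bigr => b _.
rewrite gramE !mxE mulr_sumr mulr_suml; apply: eq_bigr => j _; ring.
Qed.

Lemma gram_set12 x y u : gram (set12 x y u) = gram u.
Proof.
apply/matrixP => a b; rewrite !mxE; apply: eq_Theta => l.
by rewrite /set12; case: (l == 0 :> nat); case: (l == 1 :> nat).
Qed.

Lemma upd_set12 u f (l1 l2 : 'I_D) : l1 = 0%N :> nat -> l2 = 1%N :> nat ->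
  upd u l1 f =1 set12 (f *m u l1) (u l2) u /\ upd u l2 f =1 set12 (u l1) (f *m u l2) u.
Proof.
move=> l1_0 l2_1; have -> : l1 = ord0 by apply: val_inj.
have -> : l2 = slot1 by apply: val_inj.
split=> l; rewrite /upd /set12 -!val_eqE /=; case: l => [[|[|l]] lt_l] //=;
  by [congr (_ *m u _); apply: val_inj | congr (u _); apply: val_inj].
Qed.

Lemma delta_quad (A : 'M[k]_N) (p q : 'I_N) :
  ((delta_mx p 0 : 'cV_N)^T *m A *m (delta_mx q 0 : 'cV_N)) 0 0 = A p q.
Proof. by rewrite trmx_delta -rowE -colE !mxE. Qed.

Lemma inCent_gramP f : inCent D f <-> forall u, f^T *m gram u = gram u *m f.
Proof.
split=> [fC u | fG u l1 l2 l1_0 l2_1].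
  apply/matrixP => p q; pose w := set12 (delta_mx p 0) (delta_mx q 0) u.
  have [upd1 upd2] := upd_set12 w f (erefl : nat_of_ord (ord0 : 'I_D) = 0%N)
    (erefl : nat_of_ord slot1 = 1%N).
  have := fC w ord0 slot1 erefl erefl.
  rewrite (eq_Theta upd1) (eq_Theta upd2) !Theta_set12 gram_set12 /w /set12 /=.
  by rewrite trmx_mul !mulmxA => E; rewrite -delta_quad -[RHS]delta_quad !mulmxA E.
have [upd1 upd2] := upd_set12 u f l1_0 l2_1.
rewrite (eq_Theta upd1) (eq_Theta upd2) !Theta_set12 trmx_mul.
by rewrite -(mulmxA _ f^T) fG !mulmxA.
Qed.

Lemma sum_rest_le j : (\sum_(l < d) (j (slot l)).+1 <= d * N)%N.
Proof.
have -> : (d * N = \sum_(l < d) N)%N by rewrite sum_nat_const card_ord.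
by apply: leq_sum => l _; apply: ltn_ord.
Qed.

Lemma gram_eq0 u (a b : 'I_N) : ((a + b).+1 < N)%N -> gram u a b = 0.
Proof.
move=> lt_abN; rewrite gramE big1 // => j /eqP; rewrite sum_set12.
case: eqP => [-> | _]; last by rewrite mul0r.
case: eqP => [-> | _]; last by rewrite mul0r mulr0.
have := sum_rest_le j; rewrite subSS subn0 mulSn; lia.
Qed.

Lemma tperm_eq (T : finType) (a a' x : T) : (tperm a a' x == a) = (x == a').
Proof.
by apply/eqP/eqP => [tx | ->]; [rewrite -(tpermK a a' x) tx tpermL | apply: tpermR].
Qed.

(* Swapping the values a <-> a' in slot 0 and b <-> b' in slot 1 matches the
   summands of both sides. *)
Lemma gram_hankel u (a b a' b' : 'I_N) : (a + b = a' + b')%N -> gram u a b = gram u a' b'.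
Proof.
move=> ab_ab'; rewrite !gramE big_mkcond [RHS]big_mkcond /=.
pose z j := [ffun l : 'I_D => if l == 0 :> nat then tperm a a' (j l)
   else if l == 1 :> nat then tperm b b' (j l) else j l].
have zK : involutive z.
  move=> j; apply/ffunP => l; rewrite !ffunE.
  by case: (l == 0 :> nat); [rewrite tpermK | case: (l == 1 :> nat); rewrite ?tpermK].
have z_slot j l : z j (slot l) = j (slot l) by rewrite ffunE.
rewrite (reindex_inj (inv_inj zK)) /=; apply: eq_bigr => j _.
have -> : prod_rest u (z j) = prod_rest u j by apply: eq_bigr => l _; rewrite z_slot.
rewrite !ffunE /= !tperm_eq.
have [/eqP j0 | _] := boolP (j ord0 == a'); last by rewrite /= !mul0r; case: ifP; case: ifP.
have [/eqP j1 | _] := boolP (j slot1 == b'); last by rewrite /= !mul0r !mulr0; case: ifP; case: ifP.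
rewrite !sum_set12 !ffunE /= j0 j1 !tpermR.
under eq_bigr do rewrite z_slot.
by congr (if _ then _ else _); apply/eqP/eqP; lia.
Qed.

Lemma trmx_psi_gram u : ps^T *m gram u = gram u *m ps.
Proof.
apply/matrixP => r c; rewrite trpsi_mulmxE mulmx_psiE.
have [lt_rN lt_cN] := (ltn_ord r, ltn_ord c).
case: (posnP r) => [r0 | r_gt0]; case: (posnP c) => [c0 | c_gt0];
  rewrite ?r0 ?c0 ?r_gt0 ?c_gt0 //.
- by rewrite gram_eq0 // inordK; lia.
- by rewrite gram_eq0 // inordK; lia.
- by apply: gram_hankel; rewrite !inordK; lia.
Qed.

Lemma comm_psi_inCent f : comm_mx ps f -> inCent D f.
Proof.
move=> cf; apply/inCent_gramP => u; rewrite (comm_psiE cf).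
exact/trmx_horner_mx_intertwine/trmx_psi_gram.
Qed.

Lemma Theta_delta (t : 'I_D -> 'I_N) :
  Theta (fun l => delta_mx (t l) 0 : 'cV[k]_N) =
    ((\sum_(l < D) (t l).+1)%N == (D - 1) * N + 1)%N%:R.
Proof.
have prod_delta j : \prod_(l < D) (delta_mx (t l) 0 : 'cV[k]_N) (j l) ord0 =
    (j == [ffun l => t l])%:R.
  case: eqP => [-> | jt]; first by apply: big1 => l _; rewrite !mxE ffunE !eqxx.
  have /existsP[l jl] : [exists l, j l != t l].
    apply: contraNT (introN eqP jt) => /existsPn jt'.
    by apply/eqP/ffunP => l; rewrite ffunE; apply/eqP; rewrite -[_ == _]negbK jt'.
  by rewrite (bigD1 l) //= mxE (negbTE jl) mul0r.
rewrite /Theta; under eq_bigr do rewrite prod_delta.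
rewrite big_mkcond (bigD1 [ffun l => t l]) //= eqxx [X in _ + X]big1 ?addr0.
  by under eq_bigr do rewrite ffunE; case: ifP.
by move=> j jt; rewrite (negbTE jt); case: ifP.
Qed.

End ThetaGram.

Section CentIsCommutant.
Variables (k : fieldType) (n d : nat).
Local Notation N := n.+2.
Local Notation D := d.+3.
Local Notation ps := (psi k N).

Definition corner (s : nat) : 'I_D -> 'cV[k]_N :=
  fun l => delta_mx (if l == 2 :> nat then inord (n.+1 - s) else ord_max) 0.

Lemma gram_corner s (a b : 'I_N) : (s <= 1)%N ->
  gram (corner s) a b = ((a + b).+1 == N + s)%N%:R.
Proof.
move=> s_le1; pose t (l : 'I_D) := if l == 0 :> nat then a else if l == 1 :> nat then b
  else if l == 2 :> nat then inord (n.+1 - s) else (ord_max : 'I_N).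
rewrite mxE (@eq_Theta _ _ _ _ (fun l => delta_mx (t l) 0)) => [|l]; last first.
  by rewrite /set12 /corner /t; case: (l == 0 :> nat); case: (l == 1 :> nat).
rewrite Theta_delta; congr (_ %:R); rewrite !big_ord_recl /t /= inordK ?ltnS ?leq_subr //.
rewrite sum_nat_const card_ord; apply/eqP/eqP; lia.
Qed.

(* gram (corner 0) is the exchange matrix J and gram (corner 1) = J psi, so
   f^T J = J f and f^T J psi = J psi f force J psi f = J f psi. *)
Lemma inCent_comm_psi f : inCent D f -> comm_mx ps f.
Proof.
move/inCent_gramP => fG; set J := gram (corner 0).
have J1 : gram (corner 1) = J *m ps.
  apply/matrixP => a b; rewrite mulmx_psiE !gram_corner //.
  have lt_bN := ltn_ord b; case: posnP => [b0 | b_gt0]; last first.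
    rewrite inordK; last lia.
    by rewrite (_ : (a + b).+1 == _ = ((a + b.-1).+1 == N + 0)%N) //; apply/eqP/eqP; lia.
  by rewrite b0 addn0 addn1 eqSS ltn_eqF.
have JJ : J *m J = 1%:M.
  apply/matrixP => a b; rewrite mxE (bigD1 (rev_ord a)) //= big1 ?addr0 => [|c c_a].
    have [lt_aN lt_bN] := (ltn_ord a, ltn_ord b).
    rewrite !gram_corner //= (_ : (a + _).+1 == _) ?mul1r; last by apply/eqP; lia.
    by rewrite !mxE -val_eqE (_ : (_ + b).+1 == _ = (a == b :> nat)) //; apply/eqP/eqP; lia.
  rewrite gram_corner // (_ : (a + c).+1 == _ = false) ?mul0r //.
  by apply: contraNF c_a => /eqP ac; apply/eqP/val_inj => /=; lia.
have E : J *m (ps *m f) = J *m (f *m ps) by rewrite mulmxA -J1 -fG J1 mulmxA fG -mulmxA.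
by move: (congr1 (mulmx J) E); rewrite !mulmxA JJ !mul1mx.
Qed.

Lemma inCentE f : inCent D f <-> comm_mx ps f.
Proof. by split; [apply: inCent_comm_psi | apply: comm_psi_inCent]. Qed.

End CentIsCommutant.

Section AlgebraAutomorphisms.
Variables (k : fieldType) (n d : nat).
Local Notation N := n.+2.
Local Notation D := d.+3.
Local Notation ps := (psi k N).
Local Notation inGp := (@inGp k N).
Local Notation inCentE := (@inCentE k n d).
Implicit Types (a : 'rV[k]_n.+1) (f : 'M[k]_N).

Lemma rho_aut_is_alg_aut a : inGp a -> is_alg_aut D (rho_aut a).
Proof.
move=> Ga; have [b [_ ab ba]] := mG_inv Ga.
split; [|split; [|split; [|split; [|split; [|split]]]]].
- by move=> f _; apply/inCentE/comm_psi_rho_aut.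
- by move=> f g _ _; apply: rho_autD.
- by move=> c f _; apply: rho_autZ.
- by move=> f g /inCentE cf /inCentE cg; apply: rho_autM.
- exact: rho_aut1.
- move=> f g /inCentE cf /inCentE cg fg.
  by rewrite -(rho_aut_eG cf) -(rho_aut_eG cg) -ba !rho_aut_mG // fg.
- move=> g /inCentE cg; exists (rho_aut b g); first exact/inCentE/comm_psi_rho_aut.
  by rewrite -rho_aut_mG // ab rho_aut_eG.
Qed.

Lemma is_alg_aut_rho_aut (s : 'M[k]_N -> 'M[k]_N) : is_alg_aut D s ->
  exists2 a, inGp a & forall f, inCent D f -> rho_aut a f = s f.
Proof.
case=> [sC [sD [sZ [sM [s1 [s_inj _]]]]]].
have s_horner (p : {poly k}) : s (horner_mx ps p) = horner_mx (s ps) p.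
  apply: horner_mx_morph => //.
  - by move=> f g /inCentE cf /inCentE cg; apply: sD.
  - by move=> c f /inCentE; apply: sZ.
  - by move=> f g /inCentE cf /inCentE cg; apply: sM.
have s0 : s 0 = 0 by rewrite -(rmorph0 (horner_mx ps)) s_horner !rmorph0.
have cg : comm_mx ps (s ps) by apply/inCentE/sC/inCentE/comm_mx_refl.
have sX m : s (ps ^+ m) = s ps ^+ m.
  by rewrite -{1}(horner_mx_X ps) -rmorphXn s_horner rmorphXn /= horner_mx_X.
have g00 : s ps 0 0 = 0.
  have : (s ps ^+ N) 0 0 = 0 by rewrite -sX psi_nilpotent s0 mxE.
  rewrite {1}(comm_psiE cg) -rmorphXn horner_psi_row0 -horner_coef0 horner_exp.
  by rewrite horner_coef0 coef0_rVpoly mxE => /eqP; rewrite expf_eq0 => /andP[_ /eqP].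
exists (\row_i s ps 0 (succ_ord i)).
  rewrite inGpE mxE; apply/eqP => g01.
  suff /eqP : ps ^+ n.+1 = 0 by rewrite (negbTE (psiX_neq0 k n.+1)).
  apply: s_inj; [exact/inCentE/commrX/comm_mx_refl | exact/inCentE/comm_mx0 |].
  by rewrite s0 sX -(rho1_row0 cg g00) rho1X_top mxE g01 expr0n scale0r.
move=> f /inCentE cf; rewrite (comm_psiE cf) rho_aut_horner s_horner.
by rewrite rho1_row0.
Qed.

End AlgebraAutomorphisms.

Theorem lemma4p4 (k : closedFieldType) (d n : nat) :
  [pchar k] =i pred0 -> (3 <= d)%N -> (2 <= n)%N ->
  (* G' is a group for m with neutral element e *)
  [/\ (forall a b : 'rV[k]_(n.-1), inGp a -> inGp b -> inGp (mG a b)),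
      (forall a b c : 'rV[k]_(n.-1), inGp a -> inGp b -> inGp c ->
         mG (mG a b) c = mG a (mG b c)),
      inGp (eG k n),
      (forall a : 'rV[k]_(n.-1), inGp a -> mG (eG k n) a = a /\ mG a (eG k n) = a) &
      (forall a : 'rV[k]_(n.-1), inGp a -> exists b, [/\ inGp b, mG a b = eG k n & mG b a = eG k n])]
  /\
  (* G' is isomorphic to the group of k-algebra automorphisms of Cent_k(n,d) *)
  exists Phi : 'rV[k]_(n.-1) -> ('M[k]_n -> 'M[k]_n),
    [/\ (forall a, inGp a -> is_alg_aut d (Phi a)),
        (forall a b, inGp a -> inGp b ->
           forall f, inCent d f -> Phi (mG a b) f = Phi a (Phi b f)),
        (forall a b, inGp a -> inGp b ->
           (forall f, inCent d f -> Phi a f = Phi b f) -> a = b) &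
        (forall s : 'M[k]_n -> 'M[k]_n, is_alg_aut d s ->
           exists2 a, inGp a & forall f, inCent d f -> Phi a f = s f)].
Proof.
move=> _; case: d => [|[|[|d]]] // _; case: n => [|[|n]] // _.
split; first split.
- exact: mG_inGp.
- by move=> a b c _ _ _; apply: mGA.
- exact: inGp_eG.
- by move=> a _; split; [apply: mG1g | apply: mGg1].
- exact: mG_inv.
exists (@rho_aut k n); split.
- exact: rho_aut_is_alg_aut.
- by move=> a b _ _ f /inCentE; apply: rho_aut_mG.
- move=> a b _ _ ab; apply: rho1_inj; rewrite -!rho_aut_psi.
  exact/ab/inCentE/comm_mx_refl.
- exact: is_alg_aut_rho_aut.
Qed.
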